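(* The maps $\psi_s : \mathbf{ASM}^\star \to \mathbb{K}(q)$ and $\psi_{s'} : \mathbf{ASM}^\star \to \mathbb{K}(q)$ linearly defined, for any $s \in \{\operatorname{io}, \operatorname{oi}\}$, any $s' \in \{\operatorname{se}, \operatorname{nw}, \operatorname{sw}, \operatorname{ne}\}$, and any ASM $\delta$ of size $n$ by $\psi_s(\mathbf{F}^\star_{M^\delta}) := \frac{q^{s(\delta)}}{n!}$ and $\psi_{s'}(\mathbf{F}^\star_{M^\delta}) := \frac{q^{s'(\delta)}}{[n]_q!}$ are algebra morphisms.
   Context: Let $\mathbb{K}$ be a field of characteristic zero; $[n]_q := 1 + q + \dots + q^{n-1}$, $[n]_q! := [1]_q \cdots [n]_q$, $[0]_q! := 1$. An alternating sign matrix (ASM) of size $n$ is an $n\times n$ matrix with entries in $\{0,+,-\}$ (read as $0,1,-1$) such that every row and column starts and ends (ignoring zeros) with $+$ and in each row and column the $+$ and $-$ alternate. For an ASM $\delta$, $M^\delta$ is the $\{0,1\}$-matrix with $M^\delta_{ij}=1$ iff $\delta_{ij}\neq 0$. $\mathbf{ASM}$ is the Hopf algebra spanned by the $\mathbf{F}_{M^\delta}$ (a Hopf subalgebra of the Hopf algebra of $1$-packed matrices, graded by size), and $\mathbf{ASM}^\star$ is its graded dual, with $(\mathbf{F}^\star_{M^\delta})$ the adjoint basis; its product is $\mathbf{F}^\star_{M_1}\cdot\mathbf{F}^\star_{M_2} = \sum \mathbf{F}^\star_M$ over all $M$ obtained by shuffling the rows of $[M_1 \mid 0_{n_1\times n_2}]$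 with the rows of $[0_{n_2\times n_1}\mid M_2]$, $n_i$ the sizes. Via the bijection between ASMs and six-vertex configurations with domain wall boundary conditions, $\operatorname{oi}(\delta)$ is the number of $+$ entries and $\operatorname{io}(\delta)$ the number of $-$ entries of $\delta$; zero entries correspond to the four vertex types $\operatorname{ne}$ (vertical edges pointing up, horizontal edges pointing right), $\operatorname{nw}$ (up, left), $\operatorname{se}$ (down, right), $\operatorname{sw}$ (down, left). Equivalently, for a zero entry $\delta_{ij}$, with $r = \sum_{j'<j}\delta_{ij'}$ and $c = \sum_{i'<i}\delta_{i'j}$, its type is $\operatorname{ne}$ if $(r,c)=(0,0)$, $\operatorname{nw}$ if $(1,0)$, $\operatorname{se}$ if $(0,1)$, $\operatorname{sw}$ if $(1,1)$; $s'(\delta)$ counts the zero entries of type $s'$. *)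

From HB Require Import structures.
From mathcomp Require Import all_boot all_order all_algebra.
Set Implicit Arguments. Unset Strict Implicit. Unset Printing Implicit Defensive.
Import Order.TTheory GRing.Theory Num.Theory.
Local Open Scope ring_scope.

(* A square matrix of size n with integer entries (+ = 1, - = -1, 0 = 0).      *)

Definition alt_pm (s : seq int) : bool :=
  odd (size s) && all (fun k => s`_k == (-1) ^+ k) (iota 0 (size s)).

Definition nonzeros (s : seq int) : seq int := [seq x <- s | x != 0].

Definition is_asm (n : nat) (A : 'M[int]_n) : bool :=
  [forall i : 'I_n, alt_pm (nonzeros [seq A i j | j <- enum 'I_n])] &&
  [forall j : 'I_n, alt_pm (nonzeros [seq A i j | i <- enum 'I_n])].

(* A (candidate) basis index: a square matrix of some size. *)
Definition asmT := {n : nat & 'M[int]_n}.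
Definition asm_size (d : asmT) : nat := tag d.
Definition is_asmT (d : asmT) : bool := is_asm (tagged d).

Definition asm0 : asmT := Tagged (fun n => 'M[int]_n) (0 : 'M[int]_0).

Definition oi (n : nat) (A : 'M[int]_n) : nat :=
  #|[set p : 'I_n * 'I_n | A p.1 p.2 == 1]|.
Definition io (n : nat) (A : 'M[int]_n) : nat :=
  #|[set p : 'I_n * 'I_n | A p.1 p.2 == -1]|.

Definition rsum (n : nat) (A : 'M[int]_n) (i j : 'I_n) : int :=
  \sum_(j' < n | (j' < j)%N) A i j'.
Definition csum (n : nat) (A : 'M[int]_n) (i j : 'I_n) : int :=
  \sum_(i' < n | (i' < i)%N) A i' j.

Definition zero_type (a b : int) (n : nat) (A : 'M[int]_n) : nat :=
  #|[set p : 'I_n * 'I_n |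
      [&& A p.1 p.2 == 0, rsum A p.1 p.2 == a & csum A p.1 p.2 == b]]|.

Inductive stat_s := S_io | S_oi.
Inductive stat_s' := S_se | S_nw | S_sw | S_ne.

Definition stat_of_s (s : stat_s) (n : nat) (A : 'M[int]_n) : nat :=
  match s with S_io => io A | S_oi => oi A end.

Definition stat_of_s' (s : stat_s') (n : nat) (A : 'M[int]_n) : nat :=
  match s with
  | S_ne => zero_type 0 0 A
  | S_nw => zero_type 1 0 A
  | S_se => zero_type 0 1 A
  | S_sw => zero_type 1 1 A
  end.

(* ---------- the algebra ASM^* (formal K-linear combinations of basis
   elements F*_{M^delta}, indexed by the ASM delta) ---------- *)
Definition formal (K : fieldType) := seq (K * asmT).

Definition asm_elt (K : fieldType) (x : formal K) : bool :=
  all (fun p => is_asmT p.2) x.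

Definition mxget (n : nat) (A : 'M[int]_n) (i j : nat) : int :=
  match @insub _ (fun k => (k < n)%N) 'I_n i,
        @insub _ (fun k => (k < n)%N) 'I_n j with
  | Some i', Some j' => A i' j'
  | _, _ => 0
  end.

Definition rk (N : nat) (Sh : {set 'I_N}) (i : 'I_N) : nat :=
  #|[set k in Sh | (k < i)%N]|.

(* Shuffle of the rows of [A1 | 0] (placed at rows in S) with the rows of
   [0 | A2] (placed at rows outside S), both keeping their order. *)
Definition shuffle_mx (n1 n2 : nat) (A1 : 'M[int]_n1) (A2 : 'M[int]_n2)
    (Sh : {set 'I_(n1 + n2)}) : 'M[int]_(n1 + n2) :=
  \matrix_(i, j)
    if i \in Sh then (if (j < n1)%N then mxget A1 (rk Sh i) j else 0)
    else (if (n1 <= j)%N then mxget A2 (rk (~: Sh) i) (j - n1) else 0).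

Definition shuffles (d1 d2 : asmT) : seq asmT :=
  [seq Tagged (fun n => 'M[int]_n) (shuffle_mx (tagged d1) (tagged d2) Sh)
  | Sh <- enum [set Sh : {set 'I_(tag d1 + tag d2)} | #|Sh| == tag d1]].

(* product of ASM^*: bilinear extension of
   F*_{M1} . F*_{M2} = sum over shuffles *)
Definition fmul (K : fieldType) (x y : formal K) : formal K :=
  flatten [seq [seq (p.1 * p'.1, d) | d <- shuffles p.2 p'.2]
          | p <- x, p' <- y].

Definition funit (K : fieldType) : formal K := [:: (1, asm0)].

Definition ratfun (K : fieldType) := {fraction {poly K}}.
Definition qvar (K : fieldType) : ratfun K := tofrac ('X : {poly K}).
Definition cst (K : fieldType) (a : K) : ratfun K := tofrac (a%:P).

Definition qint (K : fieldType) (n : nat) : ratfun K :=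
  \sum_(i < n) qvar K ^+ i.
Definition qfact (K : fieldType) (n : nat) : ratfun K :=
  \prod_(1 <= k < n.+1) qint K k.

Definition psi_s_basis (K : fieldType) (s : stat_s) (d : asmT) : ratfun K :=
  qvar K ^+ stat_of_s s (tagged d) / (tag d)`!%:R.
Definition psi_s'_basis (K : fieldType) (s : stat_s') (d : asmT) : ratfun K :=
  qvar K ^+ stat_of_s' s (tagged d) / qfact K (tag d).

Definition lin_ext (K : fieldType) (f : asmT -> ratfun K) (x : formal K)
  : ratfun K := \sum_(p <- x) cst p.1 * f p.2.

Definition is_alg_morphism (K : fieldType) (f : asmT -> ratfun K) : Prop :=
  lin_ext f (funit K) = 1 /\
  forall x y : formal K, asm_elt x -> asm_elt y ->
    lin_ext f (fmul x y) = lin_ext f x * lin_ext f y.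

From HB Require Import structures.
From mathcomp Require Import all_boot all_order all_algebra.
From mathcomp Require Import zify ring.
Set Implicit Arguments. Unset Strict Implicit. Unset Printing Implicit Defensive.
Import Order.TTheory GRing.Theory Num.Theory.

(* In a shuffle of ASMs A1 (size n1) and A2 (size n2) with A1 on the row set Sh, every entry
   of A1 or A2 keeps its value and its (r, c) type, since the blocks it meets to its left and
   above are zero. The new entries are the zeros of the two off-diagonal blocks: right of a row
   of A1 they have r = 1, left of a row of A2 they have r = 0, and their c is a partial column
   sum of the other ASM, which is 0 or 1. Counting those with c = 1 (the first k rows of an ASM
   have k columns with partial sum 1) shows that each of ne, nw, se, sw gains exactly the
   number of inversions of Sh or of its complement. Hence oi and io are additive and the
   C(n1+n2, n1) shuffles account for n!, while for s' the sum of q^inv over the subsets of size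
   n1 is the Gaussian binomial coefficient, which accounts for [n]_q!. *)

Section Rank.
Variable N : nat.
Implicit Types (T : {set 'I_N}) (i : 'I_N).

Lemma rk_le T i : rk T i <= #|T|.
Proof. by apply: subset_leq_card; apply/subsetP => k; rewrite inE => /andP[]. Qed.

Lemma rk_lt T i : i \in T -> rk T i < #|T|.
Proof.
move=> iT; rewrite /rk (cardsD1 i T) iT add1n ltnS.
apply: subset_leq_card; apply/subsetP => k; rewrite !inE => /andP[kT ki].
by rewrite kT andbT; apply: contraTneq ki => ->; rewrite ltnn.
Qed.

Lemma rk_inj T : {in T &, injective (rk T)}.
Proof.
have rk_mono i i' : i' \in T -> i' < i -> rk T i' < rk T i.
  move=> i'T lt; apply: proper_card; apply/properP; split.
    by apply/subsetP => k; rewrite !inE => /andP[-> /= ki]; exact: ltn_trans lt.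
  by exists i'; rewrite !inE ?i'T ?lt ?ltnn.
move=> i i' iT i'T e; case: (ltngtP i i') => h; last exact: val_inj.
  by move: (rk_mono _ _ iT h); rewrite e ltnn.
by move: (rk_mono _ _ i'T h); rewrite e ltnn.
Qed.

Lemma perm_map_rk T : perm_eq (map (rk T) (enum T)) (iota 0 #|T|).
Proof.
have rkT_uniq : uniq (map (rk T) (enum T)).
  by rewrite map_inj_in_uniq ?enum_uniq // => x y; rewrite !mem_enum; exact: rk_inj.
apply: uniq_perm; rewrite ?iota_uniq //.
have sub_iota : {subset map (rk T) (enum T) <= iota 0 #|T|}.
  by move=> x /mapP[y]; rewrite mem_enum mem_iota add0n => yT ->; rewrite rk_lt.
have size_le : size (iota 0 #|T|) <= size (map (rk T) (enum T)).
  by rewrite size_iota size_map cardE.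
exact: (uniq_min_size rkT_uniq sub_iota size_le).2.
Qed.

Lemma big_rk (R : Type) (idx : R) (op : Monoid.com_law idx) T (F : nat -> R) :
  \big[op/idx]_(i in T) F (rk T i) = \big[op/idx]_(k < #|T|) F k.
Proof.
rewrite -big_enum -(big_map (rk T) xpredT) (perm_big _ (perm_map_rk T)).
by rewrite -{1}(subn0 #|T|) big_mkord.
Qed.

Lemma big_rk_lt (R : Type) (idx : R) (op : Monoid.com_law idx) T i (F : nat -> R) :
  \big[op/idx]_(i' in T | i' < i) F (rk T i') = \big[op/idx]_(k < rk T i) F k.
Proof.
rewrite -(big_rk op [set k in T | k < i] F).
apply: eq_big => [k|k]; first by rewrite inE.
move=> /andP[kT ki]; congr F; apply: eq_card => x; rewrite !inE.
by case: (x \in T); case xk: (x < k); rewrite ?andbF ?andbT // (ltn_trans xk ki).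
Qed.

Definition inversions T : nat :=
  \sum_(i : 'I_N) \sum_(k : 'I_N) [&& k < i, k \in T & i \notin T].

Lemma rk_sum T i : rk T i = \sum_(k : 'I_N) ((k < i) && (k \in T)).
Proof.
rewrite /rk -sum1_card big_mkcond; apply: eq_bigr => k _; rewrite inE andbC.
by case: (_ && _).
Qed.

Lemma sum_rk_setC T : \sum_(i in ~: T) rk T i = inversions T.
Proof.
rewrite big_mkcond; apply: eq_bigr => i _; rewrite rk_sum inE.
case: (i \in T) => /=; first by rewrite big1 // => k _; rewrite !andbF.
by apply: eq_bigr => k _; rewrite andbT.
Qed.

Lemma sum_card_subn_rk_setC T : \sum_(i in ~: T) (#|T| - rk T i) = inversions (~: T).
Proof.
rewrite /inversions [RHS]exchange_big /= big_mkcond; apply: eq_bigr => i _; rewrite inE.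
case iT: (i \in T) => /=; first by rewrite big1 // => k _; rewrite andbF.
have splitT k : (k \in T : nat) = ((k < i) && (k \in T)) + (~~ (k < i) && (k \in T)).
  by case: (k < i); case: (k \in T).
rewrite rk_sum -sum1_card big_mkcond /= (eq_bigr _ (fun k _ => splitT k)) big_split /= addKn.
apply: eq_bigr => k _; rewrite !inE negbK.
by case: (ltngtP k i) => h /=; rewrite ?andbF // (val_inj h) iT.
Qed.

End Rank.

Local Open Scope ring_scope.

(* [rsum]/[csum] indexed by [nat], reading entries outside [A] as [0], so that they can be
   evaluated at the ranks [rk Sh i] of the rows of a shuffle. *)
Definition row_prefix n (A : 'M[int]_n) (k j : nat) : int := \sum_(j' < j) mxget A k j'.
Definition col_prefix n (A : 'M[int]_n) (k j : nat) : int := \sum_(k' < k) mxget A k' j.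

Lemma mxgetE n (A : 'M[int]_n) (i j : 'I_n) : mxget A i j = A i j.
Proof.
rewrite /mxget (@insubT _ (fun k => (k < n)%N) _ i (ltn_ord i)).
by rewrite (@insubT _ (fun k => (k < n)%N) _ j (ltn_ord j)) /=; congr (A _ _); apply: val_inj.
Qed.

Lemma rsumE n (A : 'M[int]_n) (i j : 'I_n) : rsum A i j = row_prefix A i j.
Proof.
rewrite /row_prefix (big_ord_widen _ _ (ltnW (ltn_ord j))).
by apply: eq_bigr => k _; rewrite mxgetE.
Qed.

Lemma csumE n (A : 'M[int]_n) (i j : 'I_n) : csum A i j = col_prefix A i j.
Proof.
rewrite /col_prefix (big_ord_widen _ (fun k => mxget A k j) (ltnW (ltn_ord i))).
by apply: eq_bigr => k _; rewrite mxgetE.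
Qed.

Definition entry_count (P : int -> int -> int -> bool) n (A : 'M[int]_n) : nat :=
  #|[set p : 'I_n * 'I_n | P (A p.1 p.2) (rsum A p.1 p.2) (csum A p.1 p.2)]|.

Lemma entry_count_ord P n (A : 'M[int]_n) : entry_count P A =
  (\sum_(i < n) \sum_(j < n) P (A i j) (rsum A i j) (csum A i j))%N.
Proof.
rewrite /entry_count -sum1_card big_mkcond /= pair_big /=.
by apply: eq_bigr => -[i j] _; rewrite inE /=; case: P.
Qed.

Lemma entry_count_nat P n (A : 'M[int]_n) : entry_count P A =
  (\sum_(k < n) \sum_(j < n) P (mxget A k j) (row_prefix A k j) (col_prefix A k j))%N.
Proof.
rewrite entry_count_ord; apply: eq_bigr => i _; apply: eq_bigr => j _.
by rewrite mxgetE rsumE csumE.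
Qed.

Section Shuffle.
Variables (n1 n2 : nat) (A1 : 'M[int]_n1) (A2 : 'M[int]_n2).
Variable Sh : {set 'I_(n1 + n2)}.
Local Notation M := (shuffle_mx A1 A2 Sh).

Lemma shuffle_mx_lshift i (j : 'I_n1) :
  M i (lshift n2 j) = if i \in Sh then mxget A1 (rk Sh i) j else 0.
Proof. by rewrite mxE /= ltn_ord leqNgt ltn_ord. Qed.

Lemma shuffle_mx_rshift i (j : 'I_n2) :
  M i (rshift n1 j) = if i \in Sh then 0 else mxget A2 (rk (~: Sh) i) j.
Proof.
rewrite mxE /=; case: (i \in Sh); first by rewrite ifF // ltnNge leq_addr.
by rewrite ifT ?leq_addr // addKn.
Qed.

Lemma rsum_shuffle_lshift i (j : 'I_n1) :
  rsum M i (lshift n2 j) = if i \in Sh then row_prefix A1 (rk Sh i) j else 0.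
Proof.
rewrite /rsum big_split_ord /= [X in _ + X]big_pred0 => [|j']; last first.
  by rewrite ltnNge (leq_trans (ltnW (ltn_ord j))) ?leq_addr.
rewrite addr0 /row_prefix (big_ord_widen _ (mxget A1 (rk Sh i)) (ltnW (ltn_ord j))).
case iSh: (i \in Sh); last by rewrite big1 // => j' _; rewrite shuffle_mx_lshift iSh.
by apply: eq_bigr => j' _; rewrite shuffle_mx_lshift iSh.
Qed.

Lemma rsum_shuffle_rshift i (j : 'I_n2) : rsum M i (rshift n1 j) =
  if i \in Sh then row_prefix A1 (rk Sh i) n1 else row_prefix A2 (rk (~: Sh) i) j.
Proof.
rewrite /rsum big_split_ord /= (eq_bigl xpredT) => [|j']; last first.
  by rewrite /= (leq_trans (ltn_ord j')) ?leq_addr.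
rewrite (eq_bigl _ _ (fun j' : 'I_n2 => ltn_add2l n1 j' j)).
case iSh: (i \in Sh).
  rewrite [X in _ + X]big1 ?addr0 => [|j' _]; last by rewrite shuffle_mx_rshift iSh.
  by apply: eq_bigr => j' _; rewrite shuffle_mx_lshift iSh.
rewrite big1 ?add0r => [|j' _]; last by rewrite shuffle_mx_lshift iSh.
rewrite /row_prefix (big_ord_widen _ (mxget A2 (rk (~: Sh) i)) (ltnW (ltn_ord j))).
by apply: eq_bigr => j' _; rewrite shuffle_mx_rshift iSh.
Qed.

Lemma csum_shuffle_lshift i (j : 'I_n1) :
  csum M i (lshift n2 j) = col_prefix A1 (rk Sh i) j.
Proof.
rewrite /csum /col_prefix -(big_rk_lt _ _ _ (fun k => mxget A1 k j)) [RHS]big_mkcondl /=.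
by apply: eq_bigr => k _; rewrite shuffle_mx_lshift.
Qed.

Lemma csum_shuffle_rshift i (j : 'I_n2) :
  csum M i (rshift n1 j) = col_prefix A2 (rk (~: Sh) i) j.
Proof.
rewrite /csum /col_prefix -(big_rk_lt _ _ _ (fun k => mxget A2 k j)) [RHS]big_mkcondl /=.
by apply: eq_bigr => k _; rewrite shuffle_mx_rshift inE; case: (k \in Sh).
Qed.

Hypothesis cardSh : #|Sh| = n1.

Lemma card_setC_shuffle : #|~: Sh| = n2.
Proof. by apply/eqP; rewrite -(eqn_add2l n1) -{1}cardSh cardsC card_ord. Qed.

Hypothesis row_sum_A1 : forall k, (k < n1)%N -> row_prefix A1 k n1 = 1.

(* The zero blocks of [M] contribute entries with row prefix sum [1] (right of a row of [A1])
   or [0] (left of a row of [A2]). *)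
Lemma entry_count_shuffle P : entry_count P M =
  (entry_count P A1 + entry_count P A2 +
   \sum_(i in Sh) \sum_(j < n2) P 0 1 (col_prefix A2 (rk (~: Sh) i) j) +
   \sum_(i in ~: Sh) \sum_(j < n1) P 0 0 (col_prefix A1 (rk Sh i) j))%N.
Proof.
set F1 := fun k => (\sum_(j < n1) P (mxget A1 k j) (row_prefix A1 k j) (col_prefix A1 k j))%N.
set F2 := fun k => (\sum_(j < n2) P (mxget A2 k j) (row_prefix A2 k j) (col_prefix A2 k j))%N.
have row_in i : i \in Sh ->
    (\sum_(j < n1 + n2) P (M i j) (rsum M i j) (csum M i j) =
     F1 (rk Sh i) + \sum_(j < n2) P 0 1 (col_prefix A2 (rk (~: Sh) i) j))%N.
  move=> iSh; rewrite big_split_ord /=; congr (_ + _)%N; apply: eq_bigr => j _.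
    by rewrite shuffle_mx_lshift rsum_shuffle_lshift csum_shuffle_lshift iSh.
  by rewrite shuffle_mx_rshift rsum_shuffle_rshift csum_shuffle_rshift iSh
    row_sum_A1 // -{2}cardSh rk_lt.
have row_out i : i \in ~: Sh ->
    (\sum_(j < n1 + n2) P (M i j) (rsum M i j) (csum M i j) =
     \sum_(j < n1) P 0 0 (col_prefix A1 (rk Sh i) j) + F2 (rk (~: Sh) i))%N.
  rewrite inE => /negbTE iSh; rewrite big_split_ord /=; congr (_ + _)%N.
    by apply: eq_bigr => j _; rewrite shuffle_mx_lshift rsum_shuffle_lshift csum_shuffle_lshift iSh.
  by apply: eq_bigr => j _; rewrite shuffle_mx_rshift rsum_shuffle_rshift csum_shuffle_rshift iSh.
rewrite entry_count_ord (bigID (mem Sh)) /=.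
rewrite (eq_bigl (mem (~: Sh)) _ (fun i => esym (in_setC i Sh))).
rewrite (eq_bigr _ row_in) (eq_bigr _ row_out) !big_split /= !big_rk.
rewrite cardSh card_setC_shuffle !entry_count_nat -/F1 -/F2.
by rewrite -!addnA; congr (_ + _)%N; rewrite [RHS]addnC -addnA.
Qed.

End Shuffle.

Lemma sum_take_alternating (t : seq int) r :
  (forall k, (k < size t)%N -> t`_k = (-1) ^+ k) -> (r <= size t)%N ->
  \sum_(x <- take r t) x = (odd r)%:R.
Proof.
move=> ht; elim: r => [|r IH] lt; first by rewrite take0 big_nil.
rewrite (take_nth 0) // -cats1 big_cat big_seq1 IH ?(ltnW lt) // ht //.
by rewrite -signr_odd /=; case: (odd r) => /=; rewrite ?addr0 ?subrr.
Qed.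

Lemma sum_nonzeros (s : seq int) : \sum_(x <- nonzeros s) x = \sum_(x <- s) x.
Proof. by rewrite big_filter big_mkcond; apply: eq_bigr => x _; case: eqP => // ->. Qed.

(* A prefix of [s] has the same sum as a prefix of the alternating sequence [nonzeros s]. *)
Lemma alt_pm_sum_take (s : seq int) p : alt_pm (nonzeros s) ->
  (\sum_(x <- take p s) x == 0) || (\sum_(x <- take p s) x == 1).
Proof.
case/andP=> _ /allP alt_s.
have alt_nth k : (k < size (nonzeros s))%N -> (nonzeros s)`_k = (-1) ^+ k.
  by move=> lt_k; apply/eqP; apply: alt_s; rewrite mem_iota add0n.
have nonzeros_cat : nonzeros s = nonzeros (take p s) ++ nonzeros (drop p s).
  by rewrite /nonzeros -filter_cat cat_take_drop.
set r := size (nonzeros (take p s)).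
have le_r : (r <= size (nonzeros s))%N by rewrite nonzeros_cat size_cat leq_addr.
rewrite -sum_nonzeros -(take_size_cat (nonzeros (drop p s)) (erefl r)) -nonzeros_cat.
by rewrite sum_take_alternating //; case: (odd r).
Qed.

Lemma alt_pm_sum (s : seq int) : alt_pm (nonzeros s) -> \sum_(x <- s) x = 1.
Proof.
case/andP=> odd_size /allP alt_s; rewrite -sum_nonzeros -[nonzeros s]take_size.
rewrite sum_take_alternating ?odd_size // => k lt_k.
by apply/eqP; apply: alt_s; rewrite mem_iota add0n.
Qed.

Lemma sum_take_map_iota (g : nat -> int) m j : (j <= m)%N ->
  \sum_(x <- take j (map g (iota 0 m))) x = \sum_(x < j) g x.
Proof.
move=> jm; rewrite -map_take take_iota (minn_idPl jm) big_map.
by rewrite -(big_mkord xpredT) /index_iota subn0.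
Qed.

Section ASM.
Variables (m : nat) (A : 'M[int]_m).
Hypothesis asmA : is_asm A.

Lemma asm_row_sum k : (k < m)%N -> row_prefix A k m = 1.
Proof.
move=> km; case/andP: asmA => /forallP /(_ (Ordinal km)) alt_row _.
have row_seq : [seq A (Ordinal km) j | j <- enum 'I_m] = map (mxget A k) (iota 0 m).
  by rewrite -val_enum_ord -map_comp; apply: eq_map => j /=; rewrite -mxgetE.
move: alt_row; rewrite row_seq => /alt_pm_sum alt_row.
by rewrite -alt_row -[X in \sum_(_ <- X) _](take_size) size_map size_iota sum_take_map_iota.
Qed.

Lemma asm_col_prefix k j : (k <= m)%N -> (j < m)%N ->
  (col_prefix A k j == 0) || (col_prefix A k j == 1).
Proof.
move=> km jm; case/andP: asmA => _ /forallP /(_ (Ordinal jm)) alt_col.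
have col_seq : [seq A i (Ordinal jm) | i <- enum 'I_m] = map (fun i => mxget A i j) (iota 0 m).
  by rewrite -val_enum_ord -map_comp; apply: eq_map => i /=; rewrite -mxgetE.
by move: alt_col; rewrite col_seq => /(alt_pm_sum_take k); rewrite sum_take_map_iota.
Qed.

(* The first [k] rows have total sum [k], and each column contributes [0] or [1]. *)
Lemma asm_count_col_prefix1 k : (k <= m)%N -> (\sum_(j < m) (col_prefix A k j == 1) = k)%N.
Proof.
move=> km; apply/eqP; rewrite -(eqr_nat int) natr_sum.
have -> : k%:R = \sum_(j < m) col_prefix A k j :> int.
  rewrite /col_prefix exchange_big /= (eq_bigr (fun _ => 1)) ?sumr_const ?card_ord //.
  by move=> i _; exact: asm_row_sum (leq_trans (ltn_ord i) km).
by apply/eqP; apply: eq_bigr => j _; case/orP: (asm_col_prefix km (ltn_ord j)) => /eqP ->.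
Qed.

Lemma asm_count_col_prefix0 k : (k <= m)%N -> (\sum_(j < m) (col_prefix A k j == 0) = m - k)%N.
Proof.
move=> km; apply/eqP; rewrite -(eqn_add2r k) subnK //.
rewrite -[X in (_ + X)%N](asm_count_col_prefix1 km) -big_split -[X in _ == X]card_ord.
rewrite -sum1_card; apply/eqP/eq_bigr => j _ /=.
by case/orP: (asm_col_prefix km (ltn_ord j)) => /eqP ->.
Qed.

End ASM.

Definition zero_pred (a b : int) : int -> int -> int -> bool :=
  fun v r c => [&& v == 0, r == a & c == b].

Lemma zero_typeE a b n (A : 'M[int]_n) : zero_type a b A = entry_count (zero_pred a b) A.
Proof. by []. Qed.

Section ShuffleASM.
Variables (n1 n2 : nat) (A1 : 'M[int]_n1) (A2 : 'M[int]_n2).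
Hypotheses (asmA1 : is_asm A1) (asmA2 : is_asm A2).
Variable Sh : {set 'I_(n1 + n2)}.
Hypothesis cardSh : #|Sh| = n1.
Local Notation M := (shuffle_mx A1 A2 Sh).

Lemma entry_count_shuffle_nonzero P : (forall r c, P 0 r c = false) ->
  entry_count P M = (entry_count P A1 + entry_count P A2)%N.
Proof.
move=> P0; rewrite entry_count_shuffle //; last exact: asm_row_sum.
by rewrite !big1 ?addn0 // => i _; rewrite big1 // => j _; rewrite P0.
Qed.

Lemma zero_type_shuffle (a b : bool) : zero_type a b M =
  (zero_type a b A1 + zero_type a b A2 + inversions (if a == b then ~: Sh else Sh))%N.
Proof.
have rk_le1 i : (rk Sh i <= n1)%N by rewrite -[X in (_ <= X)%N]cardSh rk_le.
have rk_le2 i : (rk (~: Sh) i <= n2)%N.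
  by rewrite -[X in (_ <= X)%N](card_setC_shuffle cardSh) rk_le.
rewrite !zero_typeE entry_count_shuffle //; last exact: asm_row_sum.
rewrite -!addnA; congr (_ + (_ + _))%N.
rewrite /zero_pred; case: a; case: b => /=.
- rewrite [X in (_ + X)%N]big1 ?addn0 => [|i _]; last by rewrite big1.
  rewrite (eq_bigr (fun i => rk (~: Sh) i)) => [|i _]; last first.
    by rewrite (asm_count_col_prefix1 asmA2 (rk_le2 i)).
  by rewrite -{1}(setCK Sh) sum_rk_setC.
- rewrite [X in (_ + X)%N]big1 ?addn0 => [|i _]; last by rewrite big1.
  rewrite (eq_bigr (fun i => #|~: Sh| - rk (~: Sh) i)%N) => [|i _]; last first.
    by rewrite (card_setC_shuffle cardSh) (asm_count_col_prefix0 asmA2 (rk_le2 i)).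
  by rewrite -{1}(setCK Sh) sum_card_subn_rk_setC setCK.
- rewrite [X in (X + _)%N]big1 ?add0n => [|i _]; last by rewrite big1.
  rewrite (eq_bigr (fun i => rk Sh i)) => [|i _]; last first.
    by rewrite (asm_count_col_prefix1 asmA1 (rk_le1 i)).
  exact: sum_rk_setC.
- rewrite [X in (X + _)%N]big1 ?add0n => [|i _]; last by rewrite big1.
  rewrite (eq_bigr (fun i => #|Sh| - rk Sh i)%N) => [|i _]; last first.
    by rewrite cardSh (asm_count_col_prefix0 asmA1 (rk_le1 i)).
  exact: sum_card_subn_rk_setC.
Qed.

End ShuffleASM.

Local Open Scope nat_scope.

Fixpoint bit_inversions (b : bitseq) : nat :=
  if b is x :: b' then x * count negb b' + bit_inversions b' else 0.

Lemma sum_nth_count (a : pred bool) (b : bitseq) :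
  \sum_(i < size b) a (nth false b i) = count a b.
Proof. by elim: b => [|x b IH]; rewrite ?big_ord0 // big_ord_recl /= IH. Qed.

Lemma bit_inversionsE b : bit_inversions b =
  \sum_(i < size b) \sum_(k < size b | k < i) (nth false b k && ~~ nth false b i).
Proof.
elim: b => [|x b IH] /=; first by rewrite big_ord0.
rewrite big_ord_recl big_pred0 // add0n IH -sum_nth_count big_distrr -big_split /=.
apply: eq_bigr => i _; rewrite [RHS]big_mkcond big_ord_recl [in LHS]big_mkcond /= add0n.
by congr (_ + _); case: x; case: (~~ _).
Qed.

Fixpoint bitseqs (n : nat) : seq bitseq :=
  if n is n'.+1 then [seq true :: b | b <- bitseqs n'] ++ [seq false :: b | b <- bitseqs n']
  else [:: [::]].

Lemma mem_bitseqs n b : (b \in bitseqs n) = (size b == n).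
Proof.
have cons_inj (c : bool) : injective (cons c) by move=> ? ? [].
have notin_cons c b' bs : (c :: b' \in [seq ~~ c :: b'' | b'' <- bs]) = false.
  by apply/mapP => -[? _ []]; case: c.
elim: n b => [|n IH] [|x b] //=; rewrite mem_cat ?eqSS.
  by apply/negP => /orP[] /mapP[].
case: x; rewrite (mem_map (cons_inj _)) IH.
  by rewrite (notin_cons true) orbF.
by rewrite (notin_cons false).
Qed.

Lemma bitseqs_uniq n : uniq (bitseqs n).
Proof.
have cons_inj (c : bool) : injective (cons c) by move=> ? ? [].
elim: n => //= n IH; rewrite cat_uniq !(map_inj_uniq (cons_inj _)) IH /= andbT.
by apply/hasPn => _ /mapP[b _ ->]; apply/mapP => -[].
Qed.

Section Bits.
Variable n : nat.
Implicit Types T : {set 'I_n}.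

Definition bits T : bitseq := [seq i \in T | i <- enum 'I_n].

Lemma size_bits T : size (bits T) = n.
Proof. by rewrite size_map size_enum_ord. Qed.

Lemma nth_bits T (i : 'I_n) : nth false (bits T) i = (i \in T).
Proof. by rewrite (nth_map i) ?nth_ord_enum // size_enum_ord. Qed.

Lemma count_bits T : count id (bits T) = #|T|.
Proof.
rewrite -sum_nth_count size_bits -sum1_card [RHS]big_mkcond /=.
by apply: eq_bigr => i _; rewrite nth_bits; case: (i \in T).
Qed.

Lemma bits_inj : injective bits.
Proof. by move=> T1 T2 eq_bits; apply/setP => i; rewrite -!nth_bits eq_bits. Qed.

Lemma perm_bits : perm_eq (map bits (index_enum {set 'I_n})) (bitseqs n).
Proof.
apply: uniq_perm; rewrite ?(map_inj_uniq bits_inj) ?index_enum_uniq ?bitseqs_uniq //.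
move=> b; rewrite mem_bitseqs; apply/mapP/eqP => [[T _ ->]|size_b]; first exact: size_bits.
exists [set i : 'I_n | nth false b i]; first by rewrite mem_index_enum.
apply: (@eq_from_nth _ false); rewrite ?size_bits // size_b => i lt_i.
by rewrite (nth_bits _ (Ordinal lt_i)) inE.
Qed.

Lemma big_bits (R : Type) (idx : R) (op : Monoid.com_law idx) (P : pred bitseq)
    (F : bitseq -> R) :
  \big[op/idx]_(T : {set 'I_n} | P (bits T)) F (bits T) = \big[op/idx]_(b <- bitseqs n | P b) F b.
Proof. by rewrite -(perm_big _ perm_bits) big_map. Qed.

Lemma inversions_bits T : inversions T = bit_inversions (bits T).
Proof.
rewrite bit_inversionsE size_bits; apply: eq_bigr => i _; rewrite [RHS]big_mkcond.
by apply: eq_bigr => k _; rewrite !nth_bits; case: (k < i).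
Qed.

End Bits.

Local Open Scope ring_scope.

Section QAnalogue.
Variable K : fieldType.
Local Notation q := (qvar K).

Lemma qfact0 : qfact K 0 = 1.
Proof. by rewrite /qfact big_geq. Qed.

Lemma qfactS n : qfact K n.+1 = qfact K n * qint K n.+1.
Proof. by rewrite /qfact big_nat_recr. Qed.

Lemma qint_add a b : qint K (a + b) = qint K a + q ^+ a * qint K b.
Proof.
rewrite /qint big_split_ord /= mulr_sumr; congr (_ + _).
by apply: eq_bigr => i _; rewrite exprD.
Qed.

Lemma qint_neq0 n : (0 < n)%N -> qint K n != 0.
Proof.
case: n => [//|n] _.
have -> : qint K n.+1 = tofrac (\sum_(i < n.+1) ('X^i : {poly K})).
  by rewrite rmorph_sum /qint; apply: eq_bigr => i _; rewrite rmorphXn.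
rewrite tofrac_eq0; apply: contra_neq (@oner_neq0 K) => /(congr1 (coefp 0)) /=.
rewrite coef_sum big_ord_recl coefXn big1 ?addr0 ?coef0 // => i _.
by rewrite coefXn.
Qed.

Lemma qfact_neq0 n : qfact K n != 0.
Proof.
elim: n => [|n IH]; first by rewrite qfact0 oner_neq0.
by rewrite qfactS mulf_neq0 ?qint_neq0.
Qed.

(* The Gaussian binomial coefficient, defined as the inversion generating function of the
   words with [k] letters [true] and [n - k] letters [false]. *)
Definition qbinom (n k : nat) : ratfun K :=
  \sum_(b <- bitseqs n | count id b == k) q ^+ bit_inversions b.

Lemma qbinomS n k : qbinom n.+1 k =
  (if k is k'.+1 then q ^+ (n - k') * qbinom n k' else 0) + qbinom n k.
Proof.
rewrite /qbinom /= big_cat !big_map /=; congr (_ + _).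
case: k => [|k]; first by rewrite big_pred0.
rewrite mulr_sumr big_seq_cond [RHS]big_seq_cond; apply: eq_big => [b|b]; first by rewrite add1n eqSS.
case/andP; rewrite mem_bitseqs add1n eqSS => /eqP <- /eqP <-.
by rewrite mul1n exprD -(count_predC id b) addKn.
Qed.

Lemma qbinom_n0 n : qbinom n 0 = 1.
Proof.
elim: n => [|n IH]; last by rewrite qbinomS add0r.
by rewrite /qbinom /= big_cons big_nil addr0.
Qed.

Lemma qbinom_gt n k : (n < k)%N -> qbinom n k = 0.
Proof.
move=> lt_nk; rewrite /qbinom big_seq_cond big_pred0 // => b.
apply/negbTE/andP => -[]; rewrite mem_bitseqs => /eqP size_b /eqP count_b.
by move: lt_nk; rewrite -size_b -count_b ltnNge count_size.
Qed.

(* Induction through the q-Pascal rule [qbinomS], using [[n+1]_q = [n-k]_q + q^(n-k) [k+1]_q]. *)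
Lemma qbinom_fact n k : (k <= n)%N ->
  qbinom n k * qfact K k * qfact K (n - k) = qfact K n.
Proof.
elim: n k => [|n IH] [|k] le_kn //; rewrite ?qbinom_n0 ?qfact0 ?subn0 ?mul1r //.
have top : qbinom n k.+1 * (qfact K k * qint K k.+1) * qfact K (n - k)
    = qfact K n * qint K (n - k).
  rewrite -qfactS; case: (ltnP k n) => [lt_kn | le_nk].
    by rewrite -[(n - k)%N](subnSK lt_kn) (qfactS (n - k.+1)) mulrA IH.
  have -> : k = n by apply/eqP; rewrite eqn_leq le_nk andbT -ltnS.
  by rewrite qbinom_gt // subnn /qint big_ord0 mulr0 !mul0r.
have qint_split : qint K n.+1 = qint K (n - k) + q ^+ (n - k) * qint K k.+1.
  by rewrite -qint_add addnS subnK.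
rewrite subSS qbinomS !qfactS qint_split mulrDr -top -(IH k le_kn); ring.
Qed.

End QAnalogue.

Lemma mulf_div_cancel (F : fieldType) (x y c u v : F) : c * u * v != 0 ->
  x * y / (c * u * v) * c = x / u * (y / v).
Proof.
rewrite !mulf_eq0 !negb_or => /andP[/andP[c_neq0 u_neq0] v_neq0].
by field; rewrite c_neq0 u_neq0 v_neq0.
Qed.

Local Notation asm_of A := (Tagged (fun n => 'M[int]_n) A).

Section Morphisms.
Variable K : fieldType.
Hypothesis charK0 : [pchar K] =i pred0.
Local Notation q := (qvar K).

Lemma sum_q_inversions n k :
  \sum_(T : {set 'I_n} | #|T| == k) q ^+ inversions T = qbinom K n k.
Proof.
under eq_bigl => T do rewrite -count_bits.
under eq_bigr => T _ do rewrite inversions_bits.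
exact: (big_bits n _ (fun b => count id b == k) (fun b => q ^+ bit_inversions b)).
Qed.

Lemma sum_q_inversions_shuffle (c : bool) n1 n2 :
  (\sum_(Sh : {set 'I_(n1 + n2)} | #|Sh| == n1) q ^+ inversions (if c then ~: Sh else Sh))
    * qfact K n1 * qfact K n2 = qfact K (n1 + n2).
Proof.
case: c.
  rewrite (reindex_inj (@setC_inj _)) /=.
  have cardC_eq (T : {set 'I_(n1 + n2)}) : (#|~: T| == n1) = (#|T| == n2).
    by apply/eqP/eqP; have := cardsC T; rewrite card_ord; lia.
  under eq_bigl => T do rewrite cardC_eq.
  under eq_bigr => T _ do rewrite setCK.
  by rewrite sum_q_inversions mulrAC -[in qfact K n1](addnK n2 n1) qbinom_fact ?leq_addl.
by rewrite sum_q_inversions -[in qfact K n2](addKn n1 n2) qbinom_fact ?leq_addr.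
Qed.

Lemma natr_frac_neq0 m : (0 < m)%N -> (m%:R : ratfun K) != 0.
Proof.
move=> m_gt0; rewrite -(rmorph_nat (@tofrac _)) tofrac_eq0 -(rmorph_nat (@polyC K)) polyC_eq0.
by rewrite ((pcharf0P K).1 charK0 m) -lt0n.
Qed.

Lemma big_shuffles (F : asmT -> ratfun K) n1 n2 (A1 : 'M[int]_n1) (A2 : 'M[int]_n2) :
  \sum_(d <- shuffles (asm_of A1) (asm_of A2)) F d =
  \sum_(Sh : {set 'I_(n1 + n2)} | #|Sh| == n1) F (asm_of (shuffle_mx A1 A2 Sh)).
Proof. by rewrite /shuffles big_map big_enum; apply: eq_bigl => Sh; rewrite inE. Qed.

Definition sign_entry (s : stat_s) : int -> int -> int -> bool :=
  fun v _ _ => v == if s is S_io then -1 else 1.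

Lemma stat_of_sE s n (A : 'M[int]_n) : stat_of_s s A = entry_count (sign_entry s) A.
Proof. by case: s. Qed.

Definition zero_side (s : stat_s') : bool * bool :=
  match s with
  | S_ne => (false, false) | S_nw => (true, false)
  | S_se => (false, true) | S_sw => (true, true)
  end.

Lemma stat_of_s'E s n (A : 'M[int]_n) :
  stat_of_s' s A = zero_type (zero_side s).1 (zero_side s).2 A.
Proof. by case: s. Qed.

Section Shuffles.
Variables (n1 n2 : nat) (A1 : 'M[int]_n1) (A2 : 'M[int]_n2).
Hypotheses (asmA1 : is_asm A1) (asmA2 : is_asm A2).

Lemma psi_s_shuffle s :
  \sum_(d <- shuffles (asm_of A1) (asm_of A2)) psi_s_basis K s d =
  psi_s_basis K s (asm_of A1) * psi_s_basis K s (asm_of A2).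
Proof.
rewrite big_shuffles /psi_s_basis /=.
under eq_bigr => Sh /eqP cardSh.
  rewrite !stat_of_sE entry_count_shuffle_nonzero //; last by case: s.
over.
rewrite sumr_const (_ : #|_| = 'C(n1 + n2, n1)); last first.
  by rewrite -[in RHS](card_ord (n1 + n2)) -card_draws; apply: eq_card => Sh; rewrite inE.
rewrite -(bin_fact (leq_addr n2 n1)) addKn -[_ *+ _]mulr_natr !natrM exprD !stat_of_sE.
have fact_neq0 m : (m`!%:R : ratfun K) != 0 by apply/natr_frac_neq0/fact_gt0.
have binom_neq0 : ('C(n1 + n2, n1)%:R : ratfun K) != 0.
  by apply: natr_frac_neq0; rewrite bin_gt0 leq_addr.
have denom_neq0 : ('C(n1 + n2, n1)%:R * n1`!%:R * n2`!%:R : ratfun K) != 0 :=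
  mulf_neq0 (mulf_neq0 binom_neq0 (fact_neq0 n1)) (fact_neq0 n2).
by rewrite mulrA; exact: (mulf_div_cancel (q ^+ _) (q ^+ _) denom_neq0).
Qed.

Lemma psi_s'_shuffle s :
  \sum_(d <- shuffles (asm_of A1) (asm_of A2)) psi_s'_basis K s d =
  psi_s'_basis K s (asm_of A1) * psi_s'_basis K s (asm_of A2).
Proof.
set c := ((zero_side s).1 == (zero_side s).2).
rewrite big_shuffles /psi_s'_basis /=.
under eq_bigr => Sh /eqP cardSh.
  rewrite !stat_of_s'E zero_type_shuffle // -/c exprD mulrAC.
over.
rewrite -mulr_sumr exprD !stat_of_s'E; set S := \sum_(_ | _) _.
have S_fact : S * qfact K n1 * qfact K n2 = qfact K (n1 + n2) :=
  sum_q_inversions_shuffle c n1 n2.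
have denom_neq0 : S * qfact K n1 * qfact K n2 != 0 by rewrite S_fact qfact_neq0.
by rewrite -S_fact; exact: (mulf_div_cancel (q ^+ _) (q ^+ _) denom_neq0).
Qed.

End Shuffles.

Lemma is_alg_morphism_shuffle (f : asmT -> ratfun K) : f asm0 = 1 ->
  (forall n1 n2 (A1 : 'M[int]_n1) (A2 : 'M[int]_n2), is_asm A1 -> is_asm A2 ->
     \sum_(d <- shuffles (asm_of A1) (asm_of A2)) f d = f (asm_of A1) * f (asm_of A2)) ->
  is_alg_morphism f.
Proof.
move=> f0 f_shuffle; split.
  by rewrite /lin_ext /funit big_seq1 f0 mulr1 /cst polyC1 tofrac1.
move=> x y /allP asm_x /allP asm_y.
rewrite /lin_ext /fmul big_flatten /= big_allpairs_dep /= big_distrl /=.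
apply: eq_big_seq => -[a [n1 A1]] x_a; rewrite big_distrr /=.
apply: eq_big_seq => -[b [n2 A2]] y_b; rewrite big_map /= -mulr_sumr.
rewrite f_shuffle; [|exact: asm_x _ x_a|exact: asm_y _ y_b].
by rewrite /cst polyCM tofracM; exact: mulrACA.
Qed.

End Morphisms.

Theorem proposition4p5 (K : fieldType) (hK : [pchar K] =i pred0) :
  (forall s : stat_s, is_alg_morphism (psi_s_basis K s)) /\
  (forall s' : stat_s', is_alg_morphism (psi_s'_basis K s')).
Proof.
split=> s; apply: is_alg_morphism_shuffle.
- by rewrite /psi_s_basis /= stat_of_sE entry_count_ord big_ord0 fact0 divr1.
- by move=> n1 n2 A1 A2 asmA1 _; exact: psi_s_shuffle.
- by rewrite /psi_s'_basis /= stat_of_s'E zero_typeE entry_count_ord big_ord0 qfact0 divr1.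
- by move=> n1 n2 A1 A2 asmA1 asmA2; exact: psi_s'_shuffle.
Qed.
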